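(* For every positive integer $x$, the entry in row $x$, column $0$ of $T_1$ equals the number of $1$'s in the binary representation of $x$.
   Context: For a positive integer $m$, the triangle $T_m$ is an array whose row $x$ ($x=1,2,\dots$) has $x$ entries, in columns $0,\dots,x-1$. Row $1$ is the single entry $1$. For $x>1$, row $x$ is obtained from row $x-1$ by rotating it cyclically left by $m$ positions (the entry in column $c$ of row $x-1$ moves to column $(c-m)\bmod(x-1)\in\{0,\dots,x-2\}$ of row $x$), then appending in column $x-1$ a new entry equal to $1$ plus the entry in column $0$ of row $x-1$. Here $m=1$. *)

From mathcomp Require Import all_boot.
Set Implicit Arguments. Unset Strict Implicit. Unset Printing Implicit Defensive.

(* Row x of the triangle T_m, stored as the list of its entries in
   columns 0, ..., x-1.  Index: Trow m k is row k.+1 (rows start at 1). *)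
Definition rotl (m : nat) (s : seq nat) : seq nat := rot (m %% size s) s.

Fixpoint Trow (m : nat) (k : nat) : seq nat :=
  match k with
  | 0 => [:: 1]
  | k'.+1 => let r := Trow m k' in rcons (rotl m r) (head 0 r).+1
  end.

Definition T (m x c : nat) : nat := nth 0 (Trow m x.-1) c.

Fixpoint popcount_aux (fuel n : nat) : nat :=
  match fuel with
  | 0 => 0
  | f.+1 => if n is 0 then 0 else odd n + popcount_aux f n./2
  end.
Definition popcount (n : nat) : nat := popcount_aux n n.

Example T1_test : [seq T 1 x 0 | x <- iota 1 16] = [seq popcount x | x <- iota 1 16].
Proof. vm_compute. reflexivity. Qed.
Example T2_row : Trow 1 3 = [:: 1; 2; 2; 3].
Proof. vm_compute. reflexivity. Qed.

From mathcomp Require Import all_boot.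

(* Row x of T_1 lists the popcounts of x, x+1, ..., 2x-1.  Rotating left by
   one moves popcount x to the end, where it equals popcount (2x); the
   appended entry is popcount x + 1 = popcount (2x+1).  So row x+1 lists the
   popcounts of x+1, ..., 2x+1. *)

Lemma halfS_leq n : n.+1./2 <= n.
Proof. by rewrite leq_half_double ltnS -addnn leq_addr. Qed.

Lemma popcount_aux_fuel f g n :
  n <= f -> n <= g -> popcount_aux f n = popcount_aux g n.
Proof.
elim: f g n => [|f IH] [|g] [|n] //= le_nf le_ng.
by congr (_ + _); apply: IH; apply: leq_trans (halfS_leq n) _.
Qed.

Lemma popcountE n : 0 < n -> popcount n = odd n + popcount n./2.
Proof.
case: n => // n _; rewrite /popcount /=; congr (_ + _).
exact: popcount_aux_fuel (halfS_leq n) _.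
Qed.

Lemma popcount_double n : popcount n.*2 = popcount n.
Proof. by case: n => // n; rewrite popcountE ?double_gt0 // odd_double doubleK. Qed.

Lemma popcount_doubleS n : popcount n.*2.+1 = (popcount n).+1.
Proof. by rewrite popcountE //= odd_double uphalf_double. Qed.

Lemma rotl1_cons (a : nat) s : rotl 1 (a :: s) = rcons s a.
Proof. by case: s => [|b s] //; rewrite /rotl modn_small // rot1_cons. Qed.

Lemma iota_double_shift k :
  iota k.+2 k.+2 = rcons (rcons (iota k.+2 k) k.+1.*2) k.+1.*2.+1.
Proof.
rewrite -addn2 iotaD -!cats1 -catA; congr (_ ++ _).
by rewrite addnAC addnn addn2 -doubleS.
Qed.

Lemma Trow1_popcount k : Trow 1 k = map popcount (iota k.+1 k.+1).
Proof.
elim: k => [//|k IH]; rewrite [LHS]/= IH iota_double_shift.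
have -> : iota k.+1 k.+1 = k.+1 :: iota k.+2 k by [].
by rewrite rotl1_cons /= !map_rcons popcount_double popcount_doubleS.
Qed.

Theorem mainTheorem14 (x : nat) : 0 < x -> T 1 x 0 = popcount x.
Proof. by case: x => // x _; rewrite /T /= Trow1_popcount. Qed.
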